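(* Let $P$ be a shrub on a finite set $I$ with at least two elements. Then $P$ has a leaf or two distinct correlated vertices.
   Context: A shrub $P$ on a finite set $I$ is a set $E$ of edges (unordered pairs $\{i,j\}$ of distinct elements of $I$) together with a height function $h_P:I\to\mathbb{N}$. Say that $j$ covers $i$ if $\{i,j\}\in E$ and $h_P(j)=h_P(i)+1$. The axioms are: (1) if $\{i,j\}\in E$ then $h_P(i)=h_P(j)\pm 1$; (2) if $h_P(j)>0$ then there is an edge $\{i,j\}$ with $h_P(i)=h_P(j)-1$; (3) there are no four distinct vertices $a,b,c,d$ such that $a$ covers $b$ and $c$, $c$ covers $d$, and $\{b,d\}\notin E$; (4) there are no five distinct vertices $a,b,c,d,e$ such that $a$ covers $c$ and $d$, $b$ covers $d$ and $e$, $\{a,e\}\notin E$ and $\{b,c\}\notin E$. A leaf is a vertex that covers exactly one vertex and is covered by no vertex. Two vertices $i,j$ are correlated if the set of vertices covering $i$ equals the set of vertices covering $j$, and the set of vertices covered by $i$ equals the set of vertices covered by $j$. *)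

From mathcomp Require Import all_boot.
Set Implicit Arguments. Unset Strict Implicit. Unset Printing Implicit Defensive.

(* A shrub on a finite set I: an edge set E (unordered pairs of distinct
   elements, encoded as a symmetric irreflexive boolean relation) together
   with a height function h : I -> nat. *)

Section Shrub.
Variable I : finType.
Variables (E : rel I) (h : I -> nat).

Definition covers (j i : I) : bool := E i j && (h j == (h i).+1).

Definition is_shrub : Prop :=
  (forall i j, E i j = E j i) /\
  (forall i, ~~ E i i) /\
      (forall i j, E i j -> h i = (h j).+1 \/ h j = (h i).+1) /\
      (forall j, 0 < h j -> exists i, E i j /\ h i = (h j).-1) /\
      (* axiom (3) *)
      (forall a b c d : I, uniq [:: a; b; c; d] ->
          covers a b -> covers a c -> covers c d -> E b d) /\
      (* axiom (4) *)
      (forall a b c d e : I, uniq [:: a; b; c; d; e] ->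
          covers a c -> covers a d -> covers b d -> covers b e ->
          E a e \/ E b c).

Definition leaf (v : I) : Prop :=
  #|[set u | covers v u]| = 1 /\ [set u | covers u v] = set0.

Definition correlated (i j : I) : Prop :=
  [set u | covers u i] = [set u | covers u j] /\
  [set u | covers i u] = [set u | covers j u].

End Shrub.

From Pilot Require Import Defs.
From mathcomp Require Import all_boot zify.

(* Pick a vertex [a] of maximal height which, among the vertices of maximal
   height, covers as few vertices as possible.  If [a] covers at most one
   vertex it is a leaf (or all heights vanish and any two vertices are
   correlated).  Otherwise any two children of [a] are correlated: they have
   the same children by axiom (3), and every parent of one is a parent of the
   other, because axiom (4) together with the minimality of [a] forces every
   vertex sharing a child with [a] to cover all children of [a]. *)

Set Implicit Arguments.
Unset Strict Implicit.
Unset Printing Implicit Defensive.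

Section Shrub.
Variables (I : finType) (E : rel I) (h : I -> nat).

Local Notation covers := (covers E h).

Definition children x := [set u | covers x u].

Lemma covers_height u v : covers u v -> h u = (h v).+1.
Proof. by case/andP=> _ /eqP. Qed.

Lemma neq_height u v : h u != h v -> u != v.
Proof. by apply: contraNneq => ->. Qed.

Lemma exists_extremal (i0 : I) : exists a,
  (forall x, h x <= h a) /\
  (forall x, h x = h a -> #|children a| <= #|children x|).
Proof.
have [a0 _ a0_top] := @arg_maxnP I i0 predT h isT.
have [a /eqP ha a_min] :=
  @arg_minnP I a0 (fun x => h x == h a0) (fun x => #|children x|) (eqxx _).
exists a; split=> [x | x hx]; first by rewrite ha; apply: a0_top.
by apply: a_min; rewrite hx ha.
Qed.

Hypothesis shrubP : is_shrub E h.

Lemma edge_covers u v : E u v -> h u = (h v).+1 -> covers u v.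
Proof.
by case: shrubP => Esym _ Euv huv; rewrite /Defs.covers Esym Euv huv eqxx.
Qed.

Lemma exists_covered v : 0 < h v -> exists u, covers v u.
Proof.
case: shrubP => _ [_ [_ [below _]]] hv; have [u [Euv hu]] := below v hv.
by exists u; rewrite /Defs.covers Euv hu prednK ?eqxx.
Qed.

Lemma sibling_covers a b c d :
  covers a b -> covers a c -> covers c d -> b != c -> covers b d.
Proof.
case: shrubP => _ [_ [_ [_ [ax3 _]]]] ab ac cd bc.
have hb := covers_height ab; have hc := covers_height ac.
have hd := covers_height cd.
have U : uniq [:: a; b; c; d].
  rewrite /= !inE !negb_or bc !andbT.
  by rewrite !neq_height //; lia.
by apply: edge_covers (ax3 a b c d U ab ac cd) _; lia.
Qed.

Lemma crossing_covers a b c d e :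
  covers a c -> covers a d -> covers b d -> covers b e ->
  a != b -> c != d -> d != e -> c != e -> covers a e \/ covers b c.
Proof.
case: shrubP => _ [_ [_ [_ [_ ax4]]]] ac ad bd be ab cd de ce.
have hac := covers_height ac; have had := covers_height ad.
have hbd := covers_height bd; have hbe := covers_height be.
have U : uniq [:: a; b; c; d; e].
  rewrite /= !inE !negb_or ab cd de ce !andbT.
  by rewrite !neq_height //; lia.
case: (ax4 a b c d e U ac ad bd be) => [Eae | Ebc].
- by left; apply: edge_covers Eae _; lia.
- by right; apply: edge_covers Ebc _; lia.
Qed.

Section Extremal.
Variable a : I.
Hypothesis a_top : forall x, h x <= h a.
Hypothesis a_min : forall x, h x = h a -> #|children a| <= #|children x|.

Lemma children_extremal_sub x c :
  covers a c -> covers x c -> children a \subset children x.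
Proof.
move=> ac xc; have hx : h x = h a by rewrite (covers_height xc) (covers_height ac).
apply/subsetP => e; rewrite !inE => ae; apply/negPn/negP => xe.
have [c' c'x c'a] : exists2 c', c' \in children x & c' \notin children a.
  apply/subsetPn/negP => sub.
  have /eqP eq_ch : children x == children a by rewrite eqEcard sub a_min.
  have : e \in children x by rewrite eq_ch inE.
  by rewrite inE (negbTE xe).
rewrite !inE in c'x c'a.
have ax : a != x by apply: contraNneq c'a => ->.
have ec : e != c by apply: contraNneq xe => ->.
have cc' : c != c' by apply: contraNneq c'a => <-.
have ec' : e != c' by apply: contraNneq c'a => <-.
have [ac' | xe'] := crossing_covers ae ac xc c'x ax ec cc' ec'.
- by rewrite ac' in c'a.
- by rewrite xe' in xe.
Qed.

Lemma extremal_parents c1 c2 u :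
  covers a c1 -> covers a c2 -> covers u c1 -> covers u c2.
Proof.
move=> ac1 ac2 uc1.
by have /subsetP/(_ c2) := children_extremal_sub ac1 uc1; rewrite !inE; apply.
Qed.

Lemma extremal_children_correlated c1 c2 :
  covers a c1 -> covers a c2 -> c1 != c2 -> correlated E h c1 c2.
Proof.
move=> ac1 ac2 c12.
split; apply/setP => u; rewrite !inE; apply/idP/idP.
- exact: extremal_parents.
- exact: extremal_parents.
- by move=> c1u; apply: sibling_covers ac2 ac1 c1u _; rewrite eq_sym.
- by move=> c2u; apply: sibling_covers ac1 ac2 c2u c12.
Qed.

Lemma extremal_leaf : 0 < h a -> #|children a| <= 1 -> leaf E h a.
Proof.
move=> ha le1; split.
  have [u au] := exists_covered ha.
  by apply/eqP; rewrite eqn_leq le1; apply/card_gt0P; exists u; rewrite inE.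
apply/setP => u; rewrite !inE; apply/negbTE/negP => /covers_height hu.
by have := a_top u; rewrite hu ltnn.
Qed.

Lemma flat_correlated i j : h a = 0 -> correlated E h i j.
Proof.
move=> ha0; have nocov u v : covers u v = false.
  by apply/negbTE/negP => /covers_height hu; have := a_top u; rewrite hu ha0.
by split; apply/setP => u; rewrite !inE !nocov.
Qed.

End Extremal.
End Shrub.

Theorem mainTheorem3 (I : finType) (E : rel I) (h : I -> nat) :
  is_shrub E h -> 2 <= #|I| ->
  (exists v : I, leaf E h v) \/
  (exists i j : I, i <> j /\ correlated E h i j).
Proof.
move=> shrubP /card_gt1P [x [y [_ _ xy]]].
have [a [a_top a_min]] := @exists_extremal _ E h x.
have [ha0 | ha_pos] := posnP (h a).
  by right; exists x, y; split; [exact/eqP | exact: flat_correlated ha0].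
have [le1 | /card_gt1P [c1 [c2 [ac1 ac2 c12]]]] := leqP #|children E h a| 1.
  by left; exists a; exact (extremal_leaf shrubP a_top ha_pos le1).
rewrite !inE in ac1 ac2; right; exists c1, c2; split; first exact/eqP.
exact (extremal_children_correlated shrubP a_min ac1 ac2 c12).
Qed.
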